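(* Let $\mathcal{M}=(F,+,\cdot,0,1,\dots)$ be a pseudofinite field with possibly extra structure, and let $\pmb{\delta}_F$ be the coarse pseudofinite dimension normalised by $|F|$. Suppose that for every formula $\varphi(x,y)$ with $|x|=1$ and every $b\in F^{|y|}$, $\pmb{\delta}_F(\varphi(x,b))\in\{0,1\}$. Then $\pmb{\delta}_F$ is definable, and for every formula $\psi(x,y)$ and every $c\in F^{|y|}$, $\pmb{\delta}_F(\psi(x,c))\in\{0,\dots,|x|\}$.
   Context: $\mathcal{M}$ is an infinite ultraproduct of finite structures whose reduct to the ring language is a field. For internal $D=\prod D_i/\mathcal{U}$, $|D|=(|D_i|)/\mathcal{U}\in\mathbb{R}^*$; for definable $A$, $\pmb{\delta}_F(A)=\mathrm{st}(\log|A|/\log|F|)$. $\pmb{\delta}_F$ is definable if (i) for every parameter-free $\phi(x,y)$ and reals $r_1<r_2$ there is a $\emptyset$-definable $D$ with $\{a:\pmb{\delta}_F(\phi(x,a))\le r_1\}\subseteq D\subseteq\{a:\pmb{\delta}_F(\phi(x,a))<r_2\}$, and (ii) $\{\pmb{\delta}_F(\phi(x,a)):a\}$ is finite for every parameter-free $\phi(x,y)$. *)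

From HB Require Import structures.
From mathcomp Require Import all_boot all_order all_algebra.
From mathcomp Require Import all_classical all_reals ereal exp.
Set Implicit Arguments. Unset Strict Implicit. Unset Printing Implicit Defensive.
Import Order.TTheory GRing.Theory Num.Theory.
Local Open Scope ring_scope.
Local Open Scope ereal_scope.

Record signature := Signature {
  fsym : Type; farity : fsym -> nat;
  rsym : Type; rarity : rsym -> nat;
  s_add : fsym; s_mul : fsym; s_zero : fsym; s_one : fsym;
  ar_add : farity s_add = 2%N; ar_mul : farity s_mul = 2%N;
  ar_zero : farity s_zero = 0%N; ar_one : farity s_one = 0%N }.

Inductive term (L : signature) : Type :=
  | tvar : nat -> term L
  | tapp : forall f : fsym L, ('I_(farity f) -> term L) -> term L.

Inductive formula (L : signature) : Type :=
  | ffalse : formula L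
  | feq : term L -> term L -> formula L
  | frel : forall r : rsym L, ('I_(rarity r) -> term L) -> formula L
  | fnot : formula L -> formula L
  | fand : formula L -> formula L -> formula L
  | fex : nat -> formula L -> formula L.

(* finite (nonempty-or-not) L-structures *)
Record fin_struct (L : signature) := FinStruct {
  fcar :> finType;
  fint : forall f : fsym L, ('I_(farity f) -> fcar) -> fcar;
  rint : forall r : rsym L, ('I_(rarity r) -> fcar) -> bool }.

Fixpoint evalt (L : signature) (S : fin_struct L) (e : nat -> S) (t : term L) : S :=
  match t with
  | tvar k => e k
  | tapp f a => @fint _ S f (fun j => evalt e (a j))
  end.

Record ultrafilter (I : Type) := Ultrafilter {
  uf :> (I -> Prop) -> Prop;
  uf_T : uf (fun _ => True);
  uf_not0 : ~ uf (fun _ => False);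
  uf_mono : forall A B : I -> Prop, (forall i, A i -> B i) -> uf A -> uf B;
  uf_inter : forall A B : I -> Prop, uf A -> uf B -> uf (fun i => A i /\ B i);
  uf_ultra : forall A : I -> Prop, uf A \/ uf (fun i => ~ A i) }.

Definition ordvoid (T : Type) (n : nat) (H : n = 0%N) (j : 'I_n) : T.
Proof. exfalso; case: j => k; rewrite H. by []. Defined.

Section Ultraproduct.
Variables (L : signature) (I : Type) (U : ultrafilter I) (M : I -> fin_struct L).

(* elements of the ultraproduct M = prod_i M_i / U, represented by sequences;
   equality of M is equality U-almost everywhere *)
Definition elt := forall i, M i.
Definition eqU (a b : elt) : Prop := U (fun i => a i = b i).

Definition evalU (e : nat -> elt) (t : term L) : elt :=
  fun i => evalt (fun k => e k i) t.

Definition upd (e : nat -> elt) (v : nat) (x : elt) : nat -> elt :=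
  fun k => if k == v then x else e k.

Fixpoint satU (e : nat -> elt) (p : formula L) : Prop :=
  match p with
  | ffalse => False
  | feq t1 t2 => U (fun i => evalU e t1 i = evalU e t2 i)
  | frel r a => U (fun i => @rint _ (M i) r (fun j => evalU e (a j) i))
  | fnot q => ~ satU e q
  | fand q1 q2 => satU e q1 /\ satU e q2
  | fex v q => exists x : elt, satU (upd e v x) q
  end.

Definition zeroU : elt := fun i => @fint _ (M i) (s_zero L) (@ordvoid _ _ (ar_zero L)).
Definition oneU : elt := fun i => @fint _ (M i) (s_one L) (@ordvoid _ _ (ar_one L)).
Definition addU (a b : elt) : elt :=
  evalU (fun k => if k == 0%N then a else b) (tapp (fun j : 'I_(farity (s_add L)) => tvar L j)).
Definition mulU (a b : elt) : elt :=
  evalU (fun k => if k == 0%N then a else b) (tapp (fun j : 'I_(farity (s_mul L)) => tvar L j)).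

Definition ultra_is_field : Prop :=
  (forall a b c, eqU (addU a (addU b c)) (addU (addU a b) c)) /\
      (forall a b, eqU (addU a b) (addU b a)) /\
      (forall a, eqU (addU zeroU a) a) /\
      (forall a, exists b, eqU (addU a b) zeroU) /\
      (forall a b c, eqU (mulU a (mulU b c)) (mulU (mulU a b) c)) /\
      (forall a b, eqU (mulU a b) (mulU b a)) /\
      (forall a, eqU (mulU oneU a) a) /\
      (forall a b c, eqU (mulU a (addU b c)) (addU (mulU a b) (mulU a c))) /\
      ~ eqU zeroU oneU /\
      (forall a, ~ eqU a zeroU -> exists b, eqU (mulU a b) oneU).

Definition ultra_infinite : Prop :=
  forall n : nat, exists a : 'I_n -> elt, forall j k, j != k -> ~ eqU (a j) (a k).

Definition tup_env (n : nat) (x : 'I_n -> elt) (rest : nat -> elt) : nat -> elt :=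
  fun k => match (insub k : option 'I_n) with Some j => x j | None => rest (k - n)%N end.

(* phi(M, b) as a subset of M^n : phi has x = variables 0..n-1,
   y = variables n..n+m-1 (any further free variable is read as the constant 0) *)
Definition phiset (n m : nat) (phi : formula L) (b : 'I_m -> elt) : ('I_n -> elt) -> Prop :=
  fun a => satU (tup_env a (tup_env b (fun _ => zeroU))) phi.

Definition zdef (m : nat) (chi : formula L) : ('I_m -> elt) -> Prop :=
  fun b => satU (tup_env b (fun _ => zeroU)) chi.

Variable R : realType.

(* A = prod_i D_i / U (internal set) *)
Definition represents (n : nat) (A : ('I_n -> elt) -> Prop)
    (D : forall i, {set {ffun 'I_n -> M i}}) : Prop :=
  forall a : 'I_n -> elt, A a <-> U (fun i => [ffun k => a k i] \in D i).

Definition lnE (N : nat) : \bar R := if N == 0%N then -oo else (ln (N%:R : R))%:E.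

(* standard part (in the extended reals) of the hyperreal (x_i)/U *)
Definition stU (x : I -> \bar R) (r : \bar R) : Prop :=
  match r with
  | EFin r0 => forall eps : R, (0 < eps)%R ->
       U (fun i => exists y : R, x i = y%:E /\ (`|y - r0| < eps)%R)
  | +oo => forall c : R, U (fun i => c%:E < x i)
  | -oo => forall c : R, U (fun i => x i < c%:E)
  end.

Definition is_delta (n : nat) (A : ('I_n -> elt) -> Prop) (r : \bar R) : Prop :=
  exists D : forall i, {set {ffun 'I_n -> M i}},
    represents A D /\
    stU (fun i => lnE #|D i| * ((ln (#|M i|%:R : R))^-1)%:E) r.

Definition delta (n : nat) (A : ('I_n -> elt) -> Prop) : \bar R :=
  xget -oo [set r | is_delta A r].

Definition delta_definable : Prop :=
  (forall (n m : nat) (phi : formula L) (r1 r2 : R), (r1 < r2)%R ->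
     exists chi : formula L, forall b : 'I_m -> elt,
       (delta (@phiset n m phi b) <= r1%:E -> zdef chi b) /\
       (zdef chi b -> delta (@phiset n m phi b) < r2%:E))
  /\
  (forall (n m : nat) (phi : formula L),
     exists s : seq (\bar R), forall b : 'I_m -> elt, delta (@phiset n m phi b) \in s).

End Ultraproduct.

Arguments phiset {L I} U {M} n {m} phi b.
Arguments zdef {L I} U {M} {m} chi b.
Arguments delta {L I} U {M} R {n} A.

From Pilot Require Import Defs.
From HB Require Import structures.
From mathcomp Require Import all_boot all_order all_algebra.
From mathcomp Require Import all_classical all_reals ereal exp.
From mathcomp Require Import sequences lra zify.
From Stdlib Require Import Ring.
Import Order.TTheory GRing.Theory Num.Theory.
Set Implicit Arguments. Unset Strict Implicit. Unset Printing Implicit Defensive.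

(* Write [dim X] for the standard part of [log |X| / log |M|].  By induction on
   [n], for every formula [phi(x, y)] with [|x| = n] the set [phi(M, b)] is
   empty or has an integer dimension in [0, n], and the parameters [b] with
   [dim phi(M, b) >= j] form a 0-definable set.  For the inductive step, split
   [phi(M, b)] along its first coordinate.  A fiber [X] either admits a [z]
   for which [(a, c) |-> a + z c] is injective on [X^2], so that
   [|X|^2 <= |M|], or admits a collision for every [z]; as two distinct pairs
   collide for at most one [z], then [|M| <= |X|^4].  Both alternatives are
   definable in the base point, and since fibers have dimension 0 or 1 by
   hypothesis, fibers of the first kind have dimension 0 and those of the
   second kind dimension 1, uniformly.  Summing over the base,
   [dim phi(M, b) = max(d_0, d_1 + 1)], where [d_0] and [d_1] are the
   dimensions of the two parts of the base, given by the induction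
   hypothesis.  Definability of [delta] follows, as on each definable family
   it takes only the values [-oo, 0, ..., n], each on a definable set. *)

Section UltrafilterFacts.
Variables (I : Type) (U : ultrafilter I).

Lemma uf_mp (A B : I -> Prop) : U A -> (forall i, A i -> B i) -> U B.
Proof. by move=> UA AB; apply: uf_mono AB UA. Qed.

Lemma uf_contra (A : I -> Prop) : U A -> U (fun i => ~ A i) -> False.
Proof.
move=> UA UnA; apply: (@uf_not0 _ U).
by apply: (uf_mp (uf_inter UA UnA)) => i [].
Qed.

Lemma uf_not (A : I -> Prop) : ~ U A <-> U (fun i => ~ A i).
Proof.
split; first by case: (uf_ultra U A).
by move=> UnA UA; apply: uf_contra UA UnA.
Qed.

Lemma uf_forall_fin (J : finType) (A : J -> I -> Prop) :
  (forall j, U (A j)) -> U (fun i => forall j, A j i).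
Proof.
move=> UA; suff /uf_mp : U (fun i => forall j, j \in enum J -> A j i).
  by apply=> i Ai j; apply: Ai; rewrite mem_enum.
elim: (enum J) => [|j s IHs]; first by apply: (uf_mp (uf_T U)) => i _ j.
apply: (uf_mp (uf_inter (UA j) IHs)) => i [Aji As] k.
by rewrite inE => /orP[/eqP->|/As].
Qed.

Lemma uf_exists_choice (T : I -> Type) (t0 : forall i, T i) (P : forall i, T i -> Prop) :
  U (fun i => exists t, P i t) -> exists t : forall i, T i, U (fun i => P i (t i)).
Proof.
move=> UP; pose t i := if pselect (exists t, P i t) is left h then sval (cid h) else t0 i.
exists t; apply: (uf_mp UP) => i Pi; rewrite /t.
by case: pselect => [h|//]; case: (cid h).
Qed.

Lemma uf_forall_choice (T : I -> Type) (t0 : forall i, T i) (P : forall i, T i -> Prop) :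
  (forall t : forall i, T i, U (fun i => P i (t i))) -> U (fun i => forall w, P i w).
Proof.
move=> UP; apply: contrapT => /uf_not /uf_mp /(_ (fun i => (existsNP (P i)).2)).
by move=> /(uf_exists_choice t0) [t Ut]; apply: uf_contra (UP t) Ut.
Qed.

End UltrafilterFacts.

Section Satisfaction.
Variable L : signature.

Definition upde (T : Type) (e : nat -> T) (v : nat) (x : T) : nat -> T :=
  fun k => if k == v then x else e k.

Fixpoint sat (S : fin_struct L) (e : nat -> S) (p : formula L) : Prop :=
  match p with
  | ffalse => False
  | feq t1 t2 => evalt e t1 = evalt e t2
  | Defs.frel r a => rint (fun j => evalt e (a j))
  | fnot q => ~ sat e q
  | fand q1 q2 => sat e q1 /\ sat e q2
  | fex v q => exists x : S, sat (upde e v x) q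
  end.

Lemma sat_fand (S : fin_struct L) (e : nat -> S) p q : sat e (fand p q) = (sat e p /\ sat e q).
Proof. by []. Qed.

Lemma sat_fnot (S : fin_struct L) (e : nat -> S) p : sat e (fnot p) = ~ sat e p.
Proof. by []. Qed.

Lemma sat_feq (S : fin_struct L) (e : nat -> S) t1 t2 :
  sat e (feq t1 t2) = (evalt e t1 = evalt e t2).
Proof. by []. Qed.

Lemma sat_ext (S : fin_struct L) (e e' : nat -> S) p :
  (forall k, e k = e' k) -> sat e p <-> sat e' p.
Proof. by move=> ee'; rewrite (functional_extensionality_dep ee'). Qed.

Lemma sat_extW (S : fin_struct L) (e e' : nat -> S) p :
  (forall k, e k = e' k) -> sat e p -> sat e' p.
Proof. by move=> /(sat_ext p) ->. Qed.

Variables (I : Type) (U : ultrafilter I) (M : I -> fin_struct L).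

Definition proj_env (e : nat -> elt M) (i : I) : nat -> M i := fun k => e k i.

(* The inhabitant [a0] is needed to build witnesses for existential
   quantifiers, as the factors [M i] may be empty. *)
Theorem los (a0 : elt M) (p : formula L) (e : nat -> elt M) :
  satU U e p <-> U (fun i => sat (proj_env e i) p).
Proof.
have proj_upd e' v x i : proj_env (upd e' v x) i = upde (proj_env e' i) v (x i).
  by apply: functional_extensionality_dep => k; rewrite /proj_env /upd /upde; case: eqP.
elim: p e => [|t1 t2|r a|q IHq|q1 IH1 q2 IH2|v q IHq] e //=.
- by split=> // U0; apply: (@uf_not0 _ U).
- by rewrite IHq; apply: uf_not.
- rewrite IH1 IH2; split=> [[U1 U2]|U12]; first exact: uf_inter.
  by split; apply: (uf_mp U12) => i [].
- split=> [[x /IHq Ux]|Uex].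
    by apply: (uf_mp Ux) => i Si; exists (x i); rewrite -proj_upd.
  have [x Ux] := uf_exists_choice a0 Uex.
  by exists x; apply/IHq; apply: (uf_mp Ux) => i; rewrite proj_upd.
Qed.

End Satisfaction.

Definition tenv (T : Type) (n : nat) (x : 'I_n -> T) (rest : nat -> T) : nat -> T :=
  fun k => if (insub k : option 'I_n) is Some j then x j else rest (k - n)%N.

Definition cons_env (T : Type) (x : T) (e : nat -> T) : nat -> T :=
  fun k => if k is k'.+1 then e k' else x.

Section Environments.
Variable T : Type.

Lemma tenv_lt n (x : 'I_n -> T) rest k (lt_kn : (k < n)%N) :
  tenv x rest k = x (Ordinal lt_kn).
Proof. by rewrite /tenv insubT; congr x; apply: val_inj. Qed.

Lemma tenv_ge n (x : 'I_n -> T) rest k : (n <= k)%N -> tenv x rest k = rest (k - n)%N.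
Proof. by move=> le_nk; rewrite /tenv insubF // ltnNge le_nk. Qed.

Lemma tenv0 (x : 'I_0 -> T) rest k : tenv x rest k = rest k.
Proof. by rewrite tenv_ge // subn0. Qed.

Lemma tenvS n (x : 'I_n.+1 -> T) rest k :
  tenv x rest k = cons_env (x ord0) (tenv (fun j => x (lift ord0 j)) rest) k.
Proof.
case: k => [|k] /=; first by rewrite (tenv_lt _ _ (ltn0Sn n)); congr x; apply: val_inj.
have [lt_kn|le_nk] := ltnP k n; last by rewrite !tenv_ge.
by rewrite (tenv_lt _ _ (lt_kn : (k.+1 < n.+1)%N)) (tenv_lt _ _ lt_kn); congr x; apply: val_inj.
Qed.

Lemma tenv_cat n m (x : 'I_n -> T) (b : 'I_m -> T) z k :
  tenv (fun j : 'I_(n + m) => tenv x (tenv b z) j) z k = tenv x (tenv b z) k.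
Proof.
have [lt_k|le_k] := ltnP k (n + m); first by rewrite (tenv_lt _ _ lt_k).
by rewrite !tenv_ge ?subnDA //; lia.
Qed.

Lemma tenv_ext n (x y : 'I_n -> T) r r' k :
  (forall j, x j = y j) -> (forall k, r k = r' k) -> tenv x r k = tenv y r' k.
Proof. by move=> xy rr'; rewrite /tenv; case: insub. Qed.

End Environments.

Section Renaming.
Variable L : signature.

Fixpoint rent (s : nat -> nat) (t : term L) : term L :=
  match t with
  | tvar k => tvar L (s k)
  | tapp f a => tapp (fun j => rent s (a j))
  end.

Fixpoint renf (s : nat -> nat) (p : formula L) : formula L :=
  match p with
  | ffalse => ffalse L
  | feq t1 t2 => feq (rent s t1) (rent s t2)
  | Defs.frel r a => Defs.frel (fun j => rent s (a j))
  | fnot q => fnot (renf s q)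
  | fand q1 q2 => fand (renf s q1) (renf s q2)
  | fex v q => fex (s v) (renf s q)
  end.

Lemma evalt_ren (S : fin_struct L) (e : nat -> S) s t :
  evalt e (rent s t) = evalt (e \o s) t.
Proof.
elim: t => [//|f a IHa] /=.
by congr fint; apply: functional_extensionality_dep => j; apply: IHa.
Qed.

Lemma sat_ren (S : fin_struct L) s p : injective s ->
  forall e : nat -> S, sat e (renf s p) <-> sat (e \o s) p.
Proof.
move=> inj_s; elim: p => [|t1 t2|r a|q IHq|q1 IH1 q2 IH2|v q IHq] e /=.
- by [].
- by rewrite !evalt_ren.
- suff -> : (fun j => evalt e (rent s (a j))) = (fun j => evalt (e \o s) (a j)) by [].
  by apply: functional_extensionality_dep => j; rewrite evalt_ren.
- by rewrite IHq.
- by rewrite IH1 IH2.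
- have upd_ren x : upde e (s v) x \o s = upde (e \o s) v x.
    by apply: functional_extensionality_dep => k; rewrite /upde /= (inj_eq inj_s).
  by split=> -[x Sx]; exists x; move: Sx; rewrite IHq upd_ren.
Qed.

Definition f_or (p q : formula L) := fnot (fand (fnot p) (fnot q)).
Definition f_all v (p : formula L) := fnot (fex v (fnot p)).

Lemma sat_all (S : fin_struct L) (e : nat -> S) v p :
  sat e (f_all v p) <-> forall x, sat (upde e v x) p.
Proof.
split=> [nEx x|Sp [x]]; last by apply; apply: Sp.
by apply: contrapT => nSx; apply: nEx; exists x.
Qed.

Definition tbin (f : Defs.fsym L) (t1 t2 : term L) : term L :=
  tapp (fun j : 'I_(farity f) => if (j : nat) == 0%N then t1 else t2).
Definition tadd := tbin (Defs.s_add L).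
Definition tmul := tbin (Defs.s_mul L).

Definition addi (S : fin_struct L) (x y : S) : S :=
  fint (fun j : 'I_(farity (Defs.s_add L)) => if (j : nat) == 0%N then x else y).
Definition muli (S : fin_struct L) (x y : S) : S :=
  fint (fun j : 'I_(farity (Defs.s_mul L)) => if (j : nat) == 0%N then x else y).
Definition zeroi (S : fin_struct L) : S := fint (@ordvoid S _ (ar_zero L)).
Definition onei (S : fin_struct L) : S := fint (@ordvoid S _ (ar_one L)).

Lemma evalt_add (S : fin_struct L) (e : nat -> S) t1 t2 :
  evalt e (tadd t1 t2) = addi (evalt e t1) (evalt e t2).
Proof. by rewrite /= /addi; congr fint; apply: functional_extensionality_dep => j; case: ifP. Qed.

Lemma evalt_mul (S : fin_struct L) (e : nat -> S) t1 t2 :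
  evalt e (tmul t1 t2) = muli (evalt e t1) (evalt e t2).
Proof. by rewrite /= /muli; congr fint; apply: functional_extensionality_dep => j; case: ifP. Qed.

End Renaming.

Section FieldAxioms.
Variables (T : Type) (add mul : T -> T -> T) (zero one : T).

Definition field_axioms : Prop :=
  (forall a b c, add a (add b c) = add (add a b) c) /\ (forall a b, add a b = add b a) /\
  (forall a, add zero a = a) /\ (forall a, exists b, add a b = zero) /\
  (forall a b c, mul a (mul b c) = mul (mul a b) c) /\ (forall a b, mul a b = mul b a) /\
  (forall a, mul one a = a) /\ (forall a b c, mul a (add b c) = add (mul a b) (mul a c)) /\
  zero <> one /\ (forall a, a <> zero -> exists b, mul a b = one).

Hypothesis field_T : field_axioms.

Let opp (a : T) : T := sval (cid (proj1 (proj2 (proj2 (proj2 field_T))) a)).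

Let addrN a : add a (opp a) = zero.
Proof. by rewrite /opp; case: cid. Qed.

Let field_ring : ring_theory zero one add mul (fun x y => add x (opp y)) opp (@eq T).
Proof.
have [addA [addC [add0 [_ [mulA [mulC [mul1 [mulD _]]]]]]]] := field_T.
by split=> // x y z; rewrite mulC mulD !(mulC z).
Qed.

Add Ring field_ring : field_ring.

(* [c <> d] (otherwise [a = b]) and [(z - z') (c - d) = 0]. *)
Lemma affine_collision_unique a b c d z z' : (a, c) <> (b, d) ->
  add a (mul z c) = add b (mul z d) -> add a (mul z' c) = add b (mul z' d) -> z = z'.
Proof.
move=> acbd ez ez'.
have [_ [_ [_ [_ [_ [_ [_ [_ [_ mulV]]]]]]]]] := field_T.
have cd_neq0 : add c (opp d) <> zero.
  move=> cd0; apply: acbd.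
  have cd : c = d by transitivity (add (add c (opp d)) d); [ring | rewrite cd0; ring].
  subst d; congr pair.
  by transitivity (add (add a (mul z c)) (opp (mul z c))); [ring | rewrite ez; ring].
have [v cdv] := mulV _ cd_neq0.
have zz'_cd : mul (add z (opp z')) (add c (opp d)) = zero.
  transitivity (add (add (add a (mul z c)) (opp (add b (mul z d))))
                    (opp (add (add a (mul z' c)) (opp (add b (mul z' d)))))); first ring.
  by rewrite ez ez'; ring.
have zz' : add z (opp z') = zero.
  transitivity (mul (mul (add z (opp z')) (add c (opp d))) v); last by rewrite zz'_cd; ring.
  transitivity (mul (add z (opp z')) (mul (add c (opp d)) v)); last ring.
  by rewrite cdv; ring.
by transitivity (add (add z (opp z')) z'); [ring | rewrite zz'; ring].
Qed.

End FieldAxioms.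

Section Collisions.
Variables (S : finType) (add mul : S -> S -> S).

Definition collides (X : {set S}) (z : S) : Prop :=
  exists a b c d, [/\ a \in X, b \in X, c \in X, d \in X &
                      (a, c) <> (b, d) /\ add a (mul z c) = add b (mul z d)].

Lemma card_leq_exp4_collides zero one (X : {set S}) :
  field_axioms add mul zero one -> (forall z, collides X z) -> (#|S| <= #|X| ^ 4)%N.
Proof.
move=> field_S coll.
have {}coll z : exists w : S * S * S * S, let: (a, b, c, d) := w in
    [/\ a \in X, b \in X, c \in X, d \in X & (a, c) <> (b, d) /\ add a (mul z c) = add b (mul z d)].
  by have [a [b [c [d ?]]]] := coll z; exists (a, b, c, d).
pose w z := sval (cid (coll z)).
have w_inj : injective w.
  move=> z z' eqw; move: (svalP (cid (coll z))) (svalP (cid (coll z'))).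
  rewrite -/(w z) -/(w z') -eqw; case: (w z) => [[[a b] c] d] [_ _ _ _ [acbd ez]] [_ _ _ _ [_ ez']].
  exact: (affine_collision_unique field_S acbd ez ez').
have -> : #|S| = #|w @: [set: S]| by rewrite card_imset // cardsT.
have -> : (#|X| ^ 4 = #|finset.setX (finset.setX (finset.setX X X) X) X|)%N.
  by rewrite !cardsX -!mulnA /expn /=; lia.
apply/subset_leq_card/fintype.subsetP => _ /imsetP[z _ ->].
move: (svalP (cid (coll z))); rewrite -/(w z); case: (w z) => [[[a b] c] d] [Xa Xb Xc Xd _].
by rewrite !finset.in_setX Xa Xb Xc Xd.
Qed.

Lemma exp2_card_leq_not_collides (X : {set S}) z : ~ collides X z -> (#|X| ^ 2 <= #|S|)%N.
Proof.
move=> ncoll; pose f (p : S * S) := add p.1 (mul z p.2).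
have f_inj : {in finset.setX X X &, injective f}.
  move=> [a c] [b d]; rewrite !finset.in_setX => /andP[Xa Xc] /andP[Xb Xd] fab.
  by apply: contrapT => acbd; apply: ncoll; exists a, b, c, d.
by rewrite expnS expn1 -cardsX -(card_in_imset f_inj) max_card.
Qed.

End Collisions.

Local Open Scope ring_scope.

Section StandardPart.
Variables (R : realType) (I : Type) (U : ultrafilter I).

Lemma EFin_between (r r' : \bar R) : (r < r')%E -> exists c : R, (r < c%:E < r')%E.
Proof.
case: r r' => [r||] [r'||] //= lt_rr'.
- by exists ((r + r') / 2); rewrite !lte_fin in lt_rr' *; apply/andP; split; lra.
- by exists (r + 1); rewrite ltry lte_fin andbT; lra.
- by exists (r' - 1); rewrite ltNyr lte_fin; lra.
- by exists 0; rewrite ltNyr ltry.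
Qed.

Lemma stU_gt (x : I -> \bar R) r (c : R) : stU U x r -> (c%:E < r)%E ->
  U (fun i => (c%:E < x i)%E).
Proof.
case: r => [r||] st_r lt_cr; last by rewrite ltNge leNye in lt_cr.
  have e_gt0 : 0 < r - c by rewrite subr_gt0 -lte_fin.
  apply: (uf_mp (st_r _ e_gt0)) => i [y [-> yr]].
  by move: yr; rewrite lte_fin ltr_norml => /andP[]; lra.
exact: st_r.
Qed.

Lemma stU_lt (x : I -> \bar R) r (c : R) : stU U x r -> (r < c%:E)%E ->
  U (fun i => (x i < c%:E)%E).
Proof.
case: r => [r||] st_r lt_rc; first last; [exact: st_r|by rewrite ltNge leey in lt_rc|].
have e_gt0 : 0 < c - r by rewrite subr_gt0 -lte_fin.
apply: (uf_mp (st_r _ e_gt0)) => i [y [-> yr]].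
by move: yr; rewrite lte_fin ltr_norml => /andP[]; lra.
Qed.

Lemma stU_unique (x : I -> \bar R) r r' : stU U x r -> stU U x r' -> r = r'.
Proof.
wlog lt_rr' : r r' / (r < r')%E.
  by move=> wlog st_r st_r'; case: (ltgtP r r') => [lt|lt|//];
    [apply: wlog st_r st_r'|apply/esym/(wlog r' r)].
move=> st_r st_r'; have [c /andP[lt_rc lt_cr']] := EFin_between lt_rr'.
exfalso; apply: (@uf_not0 _ U); apply: (uf_mp (uf_inter (stU_lt st_r lt_rc) (stU_gt st_r' lt_cr'))).
by move=> i [lt_xc lt_cx]; have := lt_trans lt_xc lt_cx; rewrite ltxx.
Qed.

Lemma stU_congr (x y : I -> \bar R) r : U (fun i => x i = y i) -> stU U x r -> stU U y r.
Proof.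
move=> xy; case: r => [r||] st_r c /=.
- by move=> c_gt0; apply: (uf_mp (uf_inter xy (st_r c c_gt0))) => i [<-].
- by apply: (uf_mp (uf_inter xy (st_r c))) => i [<-].
- by apply: (uf_mp (uf_inter xy (st_r c))) => i [<-].
Qed.

End StandardPart.

Lemma ln_nat_le (R : realType) (x y : nat) : (0 < x)%N -> (x <= y)%N ->
  ln (x%:R : R) <= ln (y%:R : R).
Proof. by move=> x_gt0 le_xy; rewrite ler_ln ?posrE ?ltr0n ?ler_nat // (leq_trans x_gt0). Qed.

Section LogDimension.
Variables (R : realType) (I : Type) (U : ultrafilter I) (q : I -> nat).

Local Notation logq i := (ln ((q i)%:R : R)).

Definition null_ae (s : I -> nat) : Prop := U (fun i => s i = 0%N).

Definition log_dim (s : I -> nat) (k : nat) : Prop := forall e : R, 0 < e ->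
  U (fun i => (0 < s i)%N /\ (k%:R - e) * logq i <= ln ((s i)%:R : R) /\
                             ln ((s i)%:R : R) <= (k%:R + e) * logq i).

Definition log_ratio (s : I -> nat) (i : I) : \bar R :=
  (lnE R (s i) * ((logq i)^-1)%:E)%E.

Lemma log_ratio_pos s i : (0 < s i)%N -> log_ratio s i = (ln ((s i)%:R : R) / logq i)%:E.
Proof. by move=> s_gt0; rewrite /log_ratio /lnE gtn_eqF. Qed.

Lemma log_ratio_null s i : 0 < logq i -> s i = 0%N -> log_ratio s i = -oo%E.
Proof. by rewrite /log_ratio /lnE => q_gt0 ->; rewrite eqxx gt0_mulNye // lte_fin invr_gt0. Qed.

Hypothesis q_unbounded : forall N : nat, U (fun i => (N <= q i)%N).

Lemma logq_ge (c : R) : U (fun i => c <= logq i).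
Proof.
apply: (uf_mp (q_unbounded (Num.truncn (expR c)).+1)) => i le_q.
have q_gt0 : (0 < q i)%N by apply: leq_trans le_q.
rewrite -[c]expRK ler_ln ?posrE ?expR_gt0 ?ltr0n //.
by apply: ltW (lt_le_trans (truncnS_gt _) _); rewrite ler_nat.
Qed.

Lemma logq_gt0 : U (fun i => 0 < logq i).
Proof. by apply: (uf_mp (q_unbounded 2)) => i le_2q; rewrite ln_gt0 // ltr1n. Qed.

Lemma null_addn a b : null_ae a -> null_ae b -> null_ae (fun i => a i + b i)%N.
Proof. by move=> a0 b0; apply: (uf_mp (uf_inter a0 b0)) => i [-> ->]. Qed.

Lemma log_dim_null_addn a b k : null_ae a -> log_dim b k -> log_dim (fun i => a i + b i)%N k.
Proof. by move=> a0 dim_b e e_gt0; apply: (uf_mp (uf_inter a0 (dim_b e e_gt0))) => i [->]. Qed.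

Lemma log_dim_addn_null a b k : log_dim a k -> null_ae b -> log_dim (fun i => a i + b i)%N k.
Proof.
by move=> dim_a b0 e e_gt0; apply: (uf_mp (uf_inter b0 (dim_a e e_gt0))) => i [->]; rewrite addn0.
Qed.

(* [a + b <= 2 max(a, b)] costs only the constant [ln 2], negligible against [logq]. *)
Lemma log_dim_addn a b k k' :
  log_dim a k -> log_dim b k' -> log_dim (fun i => a i + b i)%N (maxn k k').
Proof.
move=> dim_a dim_b e e_gt0; have e2_gt0 : 0 < e / 2 by rewrite divr_gt0.
have ln2_small : U (fun i => ln (2%:R : R) <= e / 2 * logq i).
  by apply: (uf_mp (logq_ge (ln 2%:R / (e / 2)))) => i; rewrite ler_pdivrMr // mulrC.
apply: (uf_mp (uf_inter (uf_inter ln2_small logq_gt0)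
                        (uf_inter (dim_a _ e2_gt0) (dim_b _ e2_gt0)))).
move=> i [[ln2 q_gt0] [[a_gt0 [a_lo a_hi]] [b_gt0 [b_lo b_hi]]]].
split; first by rewrite addn_gt0 a_gt0.
have ln_a := ln_nat_le R a_gt0 (leq_addr (b i) (a i)).
have ln_b := ln_nat_le R b_gt0 (leq_addl (a i) (b i)).
have ln_ab x y : (0 < x)%N -> (x <= y)%N -> ln ((x + y)%N%:R : R) <= ln (2%:R : R) + ln (y%:R : R).
  move=> x_gt0 le_xy; have y_gt0 := leq_trans x_gt0 le_xy.
  rewrite -lnM ?posrE ?ltr0n // -natrM (ln_nat_le R) ?addn_gt0 ?x_gt0 //.
  by rewrite mul2n -addnn leq_add2r.
have ln2_ge0 : 0 <= ln (2%:R : R) by rewrite ln_ge0 // ler1n.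
have le_k : (k%:R : R) <= (maxn k k')%:R by rewrite ler_nat leq_maxl.
have le_k' : (k'%:R : R) <= (maxn k k')%:R by rewrite ler_nat leq_maxr.
split; first by case: (leqP k' k) => _; nra.
case: (leqP (a i) (b i)) => [le_ab|/ltnW le_ba].
  by have := ln_ab _ _ a_gt0 le_ab; nra.
by have := ln_ab _ _ b_gt0 le_ba; rewrite addnC; nra.
Qed.

Lemma log_dim_scale (s S : I -> nat) (k d : nat) :
  (forall e : R, 0 < e -> U (fun i =>
     ((s i)%:R : R) * expR ((d%:R - e) * logq i) <= (S i)%:R /\
     ((S i)%:R : R) <= (s i)%:R * expR ((d%:R + e) * logq i))) ->
  log_dim s k -> log_dim S (k + d).
Proof.
move=> S_bounds dim_s e e_gt0; have e2_gt0 : 0 < e / 2 by rewrite divr_gt0.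
apply: (uf_mp (uf_inter logq_gt0 (uf_inter (S_bounds _ e2_gt0) (dim_s _ e2_gt0)))).
move=> i [q_gt0 [[S_lo S_hi] [s_gt0 [s_lo s_hi]]]].
have s_pos : (0 : R) < (s i)%:R by rewrite ltr0n.
have S_pos : (0 : R) < (S i)%:R by apply: lt_le_trans S_lo; rewrite mulr_gt0 ?expR_gt0.
split; first by rewrite -(ltr0n R).
have ln_lo : ln ((s i)%:R : R) + (d%:R - e / 2) * logq i <= ln ((S i)%:R : R).
  by rewrite -[X in _ + X]expRK -lnM ?posrE ?expR_gt0 // ler_ln ?posrE ?mulr_gt0 ?expR_gt0.
have ln_hi : ln ((S i)%:R : R) <= ln ((s i)%:R : R) + (d%:R + e / 2) * logq i.
  by rewrite -[X in _ <= _ + X]expRK -lnM ?posrE ?expR_gt0 // ler_ln ?posrE ?mulr_gt0 ?expR_gt0.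
by rewrite natrD; split; nra.
Qed.

Lemma null_scale (s S : I -> nat) :
  U (fun i => (S i <= s i * q i)%N) -> null_ae s -> null_ae S.
Proof.
by move=> le_S s0; apply: (uf_mp (uf_inter le_S s0)) => i [+ s_0]; rewrite s_0 leqn0 => /eqP.
Qed.

Lemma stU_log_dim s k : log_dim s k -> stU U (log_ratio s) (k%:R)%:E.
Proof.
move=> dim_s e e_gt0; have e2_gt0 : 0 < e / 2 by rewrite divr_gt0.
apply: (uf_mp (uf_inter logq_gt0 (dim_s _ e2_gt0))) => i [q_gt0 [s_gt0 [s_lo s_hi]]].
exists (ln ((s i)%:R : R) / logq i); split; first exact: log_ratio_pos.
set y := _ / _; have ln_s : ln ((s i)%:R : R) = y * logq i by rewrite divfK ?lt0r_neq0.
by rewrite ln_s in s_lo s_hi; rewrite ltr_norml; apply/andP; split; nra.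
Qed.

Lemma stU_null s : null_ae s -> stU U (log_ratio s) -oo%E.
Proof.
move=> s0 c; apply: (uf_mp (uf_inter logq_gt0 s0)) => i [q_gt0 s_0].
by rewrite log_ratio_null // ltNyr.
Qed.

Lemma log_bounds_stU s (r : R) : stU U (log_ratio s) r%:E ->
  forall e, 0 < e -> U (fun i => (0 < s i)%N /\ (r - e) * logq i < ln ((s i)%:R : R) /\
                                 ln ((s i)%:R : R) < (r + e) * logq i).
Proof.
move=> st_r e e_gt0; apply: (uf_mp (uf_inter logq_gt0 (st_r e e_gt0))) => i [q_gt0 [y [ey ry]]].
have s_gt0 : (0 < s i)%N.
  by rewrite lt0n; apply/eqP => s_0; rewrite log_ratio_null in ey.
move: ey; rewrite log_ratio_pos // => -[ey]; split=> //.
have ln_s : ln ((s i)%:R : R) = y * logq i by rewrite -ey divfK ?lt0r_neq0.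
by rewrite ln_s; move: ry; rewrite ltr_norml => /andP[]; split; nra.
Qed.

End LogDimension.

Section Ultraproduct.
Variables (L : signature) (I : Type) (U : ultrafilter I) (M : I -> fin_struct L).

Lemma card_unbounded : ultra_infinite U M -> forall N : nat, U (fun i => (N <= #|M i|)%N).
Proof.
move=> M_inf N; have [a a_neq] := M_inf N.
have a_inj : U (fun i => forall j k : 'I_N, j != k -> a j i <> a k i).
  apply: uf_forall_fin => j; apply: uf_forall_fin => k.
  have [->|/a_neq /uf_not a_jk] := eqVneq j k; first by apply: (uf_mp (uf_T U)) => i _.
  by apply: (uf_mp a_jk) => i a_jk_i _.
apply: (uf_mp a_inj) => i a_i_inj; rewrite -[N]card_ord.
apply: (@leq_card _ _ (fun j => a j i)) => j k ajk.
by have [//|/a_i_inj /(_ ajk)] := eqVneq j k.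
Qed.

Variable a0 : elt M.

Lemma uf_forall_elt (P : forall i, M i -> Prop) :
  (forall a : elt M, U (fun i => P i (a i))) -> U (fun i => forall x, P i x).
Proof. exact: uf_forall_choice. Qed.

Lemma uf_forall_elt2 (P : forall i, M i -> M i -> Prop) :
  (forall a b : elt M, U (fun i => P i (a i) (b i))) -> U (fun i => forall x y, P i x y).
Proof.
by move=> UP; apply: uf_forall_elt => a; apply: (uf_forall_elt (P := fun i => P i (a i))).
Qed.

Lemma uf_forall_elt3 (P : forall i, M i -> M i -> M i -> Prop) :
  (forall a b c : elt M, U (fun i => P i (a i) (b i) (c i))) ->
  U (fun i => forall x y z, P i x y z).
Proof.
by move=> UP; apply: uf_forall_elt => a; apply: (uf_forall_elt2 (P := fun i => P i (a i))).
Qed.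

Lemma addUE (a b : elt M) i : addU a b i = addi (a i) (b i).
Proof.
by rewrite /addU /evalU /= /addi; congr fint; apply: functional_extensionality_dep => j; case: ifP.
Qed.

Lemma mulUE (a b : elt M) i : mulU a b i = muli (a i) (b i).
Proof.
by rewrite /mulU /evalU /= /muli; congr fint; apply: functional_extensionality_dep => j; case: ifP.
Qed.

Lemma field_factors : ultra_is_field U M ->
  U (fun i => field_axioms (@addi L (M i)) (@muli L (M i)) (zeroi (M i)) (onei (M i))).
Proof.
case=> addA [addC [add0 [addN [mulA [mulC [mul1 [mulD [zero_one mulV]]]]]]]].
have addA_i : U (fun i => forall x y z : M i, addi x (addi y z) = addi (addi x y) z).
  by apply: uf_forall_elt3 => a b c; apply: (uf_mp (addA a b c)) => i; rewrite !addUE.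
have addC_i : U (fun i => forall x y : M i, addi x y = addi y x).
  by apply: uf_forall_elt2 => a b; apply: (uf_mp (addC a b)) => i; rewrite !addUE.
have add0_i : U (fun i => forall x : M i, addi (zeroi (M i)) x = x).
  by apply: uf_forall_elt => a; apply: (uf_mp (add0 a)) => i; rewrite !addUE.
have addN_i : U (fun i => forall x, exists y, addi x y = zeroi (M i)).
  apply: uf_forall_elt => a; have [b ab0] := addN a.
  by apply: (uf_mp ab0) => i; rewrite addUE => ab0_i; exists (b i).
have mulA_i : U (fun i => forall x y z : M i, muli x (muli y z) = muli (muli x y) z).
  by apply: uf_forall_elt3 => a b c; apply: (uf_mp (mulA a b c)) => i; rewrite !mulUE.
have mulC_i : U (fun i => forall x y : M i, muli x y = muli y x).
  by apply: uf_forall_elt2 => a b; apply: (uf_mp (mulC a b)) => i; rewrite !mulUE.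
have mul1_i : U (fun i => forall x : M i, muli (onei (M i)) x = x).
  by apply: uf_forall_elt => a; apply: (uf_mp (mul1 a)) => i; rewrite !mulUE.
have mulD_i : U (fun i => forall x y z : M i, muli x (addi y z) = addi (muli x y) (muli x z)).
  by apply: uf_forall_elt3 => a b c; apply: (uf_mp (mulD a b c)) => i; rewrite !mulUE !addUE !mulUE.
have /uf_not zero_one_i := zero_one.
have mulV_i : U (fun i => forall x, x <> zeroi (M i) -> exists y, muli x y = onei (M i)).
  apply: uf_forall_elt => a; have [a0_eq|a_neq0] := pselect (eqU U a (zeroU M)).
    by apply: (uf_mp a0_eq) => i /= ->.
  have [b ab1] := mulV a a_neq0.
  by apply: (uf_mp ab1) => i; rewrite mulUE => ab1_i _; exists (b i).
apply: (uf_mp (uf_inter addA_i (uf_inter addC_i (uf_inter add0_i (uf_inter addN_i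
  (uf_inter mulA_i (uf_inter mulC_i (uf_inter mul1_i (uf_inter mulD_i
  (uf_inter zero_one_i mulV_i)))))))))).
by move=> i [? [? [? [? [? [? [? [? [? ?]]]]]]]]]; do 9 (split=> //).
Qed.

Lemma represents_unique n (A : ('I_n -> elt M) -> Prop) D D' :
  represents U A D -> represents U A D' -> U (fun i => D i = D' i).
Proof.
move=> rep_D rep_D'.
suff DD' : U (fun i => forall t, (t \in D i) = (t \in D' i)).
  by apply: (uf_mp DD') => i DD'_i; apply/setP.
apply: (uf_forall_choice (T := fun i => {ffun 'I_n -> M i}) (fun i => [ffun=> a0 i])) => t.
pose x : 'I_n -> elt M := fun k i => t i k.
have xt i : [ffun k => x k i] = t i by apply/ffunP => k; rewrite ffunE.
have rep_t D'' : represents U A D'' -> A x <-> U (fun i => t i \in D'' i).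
  by move=> /(_ x) ->; split=> Ut; apply: (uf_mp Ut) => i; rewrite xt.
have [tD|/uf_not tD] := pselect (U (fun i => t i \in D i)).
  have tD' : U (fun i => t i \in D' i) by apply/(rep_t _ rep_D')/(rep_t _ rep_D).
  by apply: (uf_mp (uf_inter tD tD')) => i [-> ->].
have /uf_not tD' : ~ U (fun i => t i \in D' i).
  by move=> /(rep_t _ rep_D') /(rep_t _ rep_D) /uf_contra; apply.
by apply: (uf_mp (uf_inter tD tD')) => i [/negP/negbTE -> /negP/negbTE ->].
Qed.

Variable R : realType.

Local Notation card_M := (fun i => #|M i|).
Local Notation card_ratio D := (log_ratio R card_M (fun i => #|D i|)).

Lemma delta_eq_stU n (A : ('I_n -> elt M) -> Prop) D r :
  represents U A D -> stU U (card_ratio D) r -> delta U R A = r.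
Proof.
move=> rep_D st_r; rewrite /delta; case: xgetP => [r' _ [D' [rep_D' st_r']]|no_delta].
  apply: (stU_unique st_r' (stU_congr _ st_r)).
  by apply: (uf_mp (represents_unique rep_D rep_D')) => i DD'; rewrite /log_ratio DD'.
by have := no_delta r; case; exists D.
Qed.

(* [delta] returns the junk value [-oo] when no standard part exists. *)
Lemma stU_delta n (A : ('I_n -> elt M) -> Prop) D :
  represents U A D -> delta U R A <> -oo%E -> stU U (card_ratio D) (delta U R A).
Proof.
move=> rep_D; rewrite /delta; case: xgetP => [r' _ [D' [rep_D' st_r']] _|//].
apply: (stU_congr _ st_r').
by apply: (uf_mp (represents_unique rep_D' rep_D)) => i D'D; rewrite /log_ratio D'D.
Qed.

Definition param_env m (b : 'I_m -> elt M) (i : I) : nat -> M i :=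
  tenv (fun j => b j i) (fun _ => zeroi (M i)).

Definition def_set (i : I) n (phi : formula L) (e : nat -> M i) : {set {ffun 'I_n -> M i}} :=
  [set t : {ffun 'I_n -> M i} | `[< sat (tenv (fun j => t j) e) phi >]].

Definition def_card n m (phi : formula L) (b : 'I_m -> elt M) (i : I) : nat :=
  #|def_set n phi (param_env b i)|.

Lemma proj_env_tup n (x : 'I_n -> elt M) rest i :
  proj_env (tup_env x rest) i = tenv (fun j => x j i) (proj_env rest i).
Proof.
by apply: functional_extensionality_dep => k; rewrite /proj_env /tup_env /tenv; case: insub.
Qed.

Lemma phiset_los n m (phi : formula L) (b : 'I_m -> elt M) a :
  phiset U n phi b a <-> U (fun i => sat (tenv (fun j => a j i) (param_env b i)) phi).
Proof.
by rewrite /phiset (los U a0); split=> Ua; apply: (uf_mp Ua) => i; rewrite !proj_env_tup.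
Qed.

Lemma zdef_los m (chi : formula L) (b : 'I_m -> elt M) :
  zdef U chi b <-> U (fun i => sat (param_env b i) chi).
Proof. by rewrite /zdef (los U a0); split=> Ub; apply: (uf_mp Ub) => i; rewrite proj_env_tup. Qed.

Lemma represents_phiset n m (phi : formula L) (b : 'I_m -> elt M) :
  represents U (phiset U n phi b) (fun i => def_set n phi (param_env b i)).
Proof.
move=> a; rewrite phiset_los; split=> Ua; apply: (uf_mp Ua) => i; rewrite inE.
  by move=> Sa; apply/asboolP; apply: (sat_extW _ Sa) => k; apply: tenv_ext => // j; rewrite ffunE.
by move=> /asboolP; apply: sat_extW => k; apply: tenv_ext => // j; rewrite ffunE.
Qed.

Lemma delta_phiset n m (phi : formula L) (b : 'I_m -> elt M) r :
  stU U (log_ratio R card_M (def_card n phi b)) r -> delta U R (phiset U n phi b) = r.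
Proof. exact: (delta_eq_stU (represents_phiset (n:=n) phi b)). Qed.

Lemma stU_delta_phiset n m (phi : formula L) (b : 'I_m -> elt M) :
  delta U R (phiset U n phi b) <> -oo%E ->
  stU U (log_ratio R card_M (def_card n phi b)) (delta U R (phiset U n phi b)).
Proof. exact: (stU_delta (represents_phiset (n:=n) phi b)). Qed.

End Ultraproduct.

Lemma card_set_sum (T : finType) (P : pred T) : #|[set x | P x]| = (\sum_x P x)%N.
Proof. by rewrite -sum1_card big_mkcond; apply: eq_bigr => x _; rewrite inE; case: (P x). Qed.

Section Counting.
Variable T : finType.

Lemma card_ffunS n (P : T -> {ffun 'I_n -> T} -> bool) :
  #|[set t : {ffun 'I_n.+1 -> T} | P (t ord0) [ffun j => t (lift ord0 j)]]| =
  (\sum_(g : {ffun 'I_n -> T}) #|[set x | P x g]|)%N.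
Proof.
pose cons_ffun (p : T * {ffun 'I_n -> T}) : {ffun 'I_n.+1 -> T} :=
  [ffun j => if unlift ord0 j is Some j' then p.2 j' else p.1].
have cons_bij : {on [pred t | true], bijective cons_ffun}.
  apply: onW_bij; exists (fun t : {ffun 'I_n.+1 -> T} => (t ord0, [ffun j => t (lift ord0 j)])).
    by move=> [x g]; rewrite ffunE unlift_none; congr pair; apply/ffunP => j; rewrite !ffunE liftK.
  by move=> t; apply/ffunP => j; rewrite ffunE; case: unliftP => [j' ->|->]; rewrite ?ffunE.
transitivity (\sum_(g : {ffun 'I_n -> T}) \sum_x (P x g : nat))%N; last first.
  by apply: eq_bigr => g _; rewrite (card_set_sum (P^~ g)).
rewrite card_set_sum exchange_big pair_big (reindex cons_ffun cons_bij) /=.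
apply: eq_bigr => -[x g] _ /=.
by rewrite ffunE unlift_none; congr (nat_of_bool (P _ _)); apply/ffunP => j; rewrite !ffunE liftK.
Qed.

Lemma card_ffun1 (P : pred T) : #|[set t : {ffun 'I_1 -> T} | P (t ord0)]| = #|[set x | P x]|.
Proof.
have const_inj : injective (fun x : T => [ffun _ : 'I_1 => x]).
  by move=> x y /ffunP /(_ ord0); rewrite !ffunE.
rewrite -(card_imset _ const_inj); apply: eq_card => t; rewrite inE.
apply/idP/imsetP => [Pt|[x]]; last by rewrite inE => Px ->; rewrite ffunE.
by exists (t ord0); rewrite ?inE //; apply/ffunP => j; rewrite ffunE (ord1 j).
Qed.

Lemma sum_card_bounds (R : realType) (P : pred T) (f : T -> nat) (lo hi : R) :
  (forall x, P x -> lo <= (f x)%:R /\ (f x)%:R <= hi) ->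
  #|[set x | P x]|%:R * lo <= (\sum_x (P x * f x)%N)%:R /\
  (\sum_x (P x * f x)%N)%:R <= #|[set x | P x]|%:R * hi.
Proof.
move=> f_bounds; rewrite card_set_sum !natr_sum !mulr_suml.
split; apply: ler_sum => x _; case Px: (P x); rewrite ?mul1n ?mul0n ?mul1r ?mul0r //;
  by have [] := f_bounds x Px.
Qed.

End Counting.

Section FiberFormulas.
Variables (L : signature) (N : nat) (phi : formula L).

(* Substitutes [w] for the variable [0] of [phi] and [k] for [k.+1] when
   [k < N]; the variables [k.+1 >= N.+1], which are interpreted by the
   constant [0], are moved [s] places up, out of the way of [w]. *)
Definition ins_var (w s : nat) : nat -> nat :=
  fun k => if k is k'.+1 then (if (k' < N)%N then k' else k' + s)%N else w.

Lemma ins_var_inj w s : (N <= w < N + s)%N -> injective (ins_var w s).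
Proof. by move=> /andP[le_Nw lt_w] [|x] [|y] /=; do ?case: ifP; lia. Qed.

Definition exists_first : formula L := fex N (renf (ins_var N 1) phi).

Definition phi_at (k : nat) : formula L := renf (ins_var k 5) phi.

Definition collision_body : formula L :=
  fand (phi_at N.+1) (fand (phi_at N.+2) (fand (phi_at N.+3) (fand (phi_at N.+4)
  (fand (fnot (fand (feq (tvar L N.+1) (tvar L N.+2)) (feq (tvar L N.+3) (tvar L N.+4))))
        (feq (tadd (tvar L N.+1) (tmul (tvar L N) (tvar L N.+3)))
             (tadd (tvar L N.+2) (tmul (tvar L N) (tvar L N.+4)))))))).

Definition all_collide : formula L :=
  f_all N (fex N.+1 (fex N.+2 (fex N.+3 (fex N.+4 collision_body)))).

Variables (S : fin_struct L) (e : nat -> S).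
Hypothesis e_zero : forall k, (N <= k)%N -> e k = zeroi S.

Definition fiber : {set S} := [set x | `[< sat (cons_env x e) phi >]].

Lemma in_fiber x : x \in fiber <-> sat (cons_env x e) phi.
Proof. by rewrite inE; split=> /asboolP. Qed.

Lemma sat_ins_var w s (x : S) (e' : nat -> S) : (N <= w < N + s)%N -> e' w = x ->
  (forall k, (k < N)%N -> e' k = e k) -> (forall k, (N <= k)%N -> e' (k + s)%N = zeroi S) ->
  sat e' (renf (ins_var w s) phi) <-> sat (cons_env x e) phi.
Proof.
move=> w_range e'w e'_lo e'_hi; rewrite sat_ren; last exact: ins_var_inj.
apply: sat_ext => -[|k] /=; first by rewrite e'w.
have [lt_kN|le_Nk] := ltnP k N; first exact: e'_lo.
by rewrite e'_hi // e_zero.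
Qed.

Lemma sat_exists_first : sat e exists_first <-> exists x, x \in fiber.
Proof.
have sat_at x : sat (upde e N x) (renf (ins_var N 1) phi) <-> x \in fiber.
  rewrite in_fiber (@sat_ins_var N 1 x) ?/upde ?eqxx //; first lia.
    by move=> k lt_kN; case: eqP => //; lia.
  by move=> k le_Nk; case: eqP => [|_]; [lia|apply: e_zero; lia].
by split=> -[x /sat_at fx]; exists x.
Qed.

Lemma sat_all_collide : sat e all_collide <-> forall z, collides (@addi L S) (@muli L S) fiber z.
Proof.
have body z a b c d : sat (upde (upde (upde (upde (upde e N z) N.+1 a) N.+2 b) N.+3 c) N.+4 d)
    collision_body <-> [/\ a \in fiber, b \in fiber, c \in fiber, d \in fiber &
                           (a, c) <> (b, d) /\ addi a (muli z c) = addi b (muli z d)].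
  set e5 := upde _ N.+4 d.
  have e5_lo k : (k < N)%N -> e5 k = e k by rewrite /e5 /upde; repeat case: eqP => //; lia.
  have e5_hi k : (N <= k)%N -> e5 (k + 5)%N = zeroi S.
    by move=> le_Nk; rewrite /e5 /upde; repeat case: eqP => [?|_]; try lia; apply: e_zero; lia.
  have [e5z e5a e5b e5c e5d] : [/\ e5 N = z, e5 N.+1 = a, e5 N.+2 = b, e5 N.+3 = c & e5 N.+4 = d].
    by rewrite /e5 /upde; split; repeat case: eqP => //; lia.
  rewrite /collision_body !sat_fand sat_fnot sat_fand !sat_feq !evalt_add !evalt_mul /=.
  rewrite e5z e5a e5b e5c e5d /phi_at (@sat_ins_var N.+1 5 a) ?(@sat_ins_var N.+2 5 b)
    ?(@sat_ins_var N.+3 5 c) ?(@sat_ins_var N.+4 5 d) //; try lia.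
  split=> [[/in_fiber ? [/in_fiber ? [/in_fiber ? [/in_fiber ? [acbd ?]]]]]|
           [/in_fiber ? /in_fiber ? /in_fiber ? /in_fiber ? [acbd ?]]]; do ?split=> //.
    by case=> ab cd; apply: acbd.
  by case=> ab cd; apply: acbd; rewrite ab cd.
rewrite sat_all; split=> coll z; have [a [b [c [d /body ?]]]] := coll z.
  by exists a, b, c, d.
by exists a, b, c, d.
Qed.

End FiberFormulas.

(* Formulas in the variables [(x_1, ..., x_n, b)] of [phi(x_0, x_1, ..., x_n, b)],
   classifying its fiber in [x_0]. *)
Definition thin_fibers L n m (phi : formula L) : formula L :=
  fand (exists_first (n + m) phi) (fnot (all_collide (n + m) phi)).

Definition thick_fibers L n m (phi : formula L) : formula L :=
  fand (exists_first (n + m) phi) (all_collide (n + m) phi).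

Section Fibers.
Variables (L : signature) (I : Type) (M : I -> fin_struct L).
Variables (n m : nat) (phi : formula L) (b : 'I_m -> elt M).

Definition join_params (x : 'I_n -> elt M) : 'I_(n + m) -> elt M :=
  fun j => tup_env x (tup_env b (fun _ => zeroU M)) j.

Definition fiber_card i (g : 'I_n -> M i) : nat := #|fiber phi (tenv g (param_env b i))|.

Lemma param_env_join x i k :
  param_env (join_params x) i k = tenv (fun j => x j i) (param_env b i) k.
Proof.
rewrite /param_env -tenv_cat; apply: tenv_ext => // j.
by rewrite /join_params -/(proj_env _ i j) !proj_env_tup.
Qed.

Lemma tenv_param_zero i (g : 'I_n -> M i) k :
  (n + m <= k)%N -> tenv g (param_env b i) k = zeroi (M i).
Proof.
by move=> le_k; rewrite tenv_ge ?(leq_trans (leq_addr m n)) // /param_env tenv_ge //; lia.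
Qed.

Lemma def_card1_join x i : def_card 1 phi (join_params x) i = fiber_card (fun j => x j i).
Proof.
rewrite /def_card /def_set /fiber_card /fiber -card_ffun1; apply: eq_card => t; rewrite !inE.
congr (`[< _ >]); apply/propext/sat_ext => k; rewrite tenvS; case: k => //= k.
by rewrite tenv0 param_env_join.
Qed.

Lemma def_cardS i : def_card n.+1 phi b i = (\sum_(g : {ffun 'I_n -> M i}) fiber_card g)%N.
Proof.
rewrite /def_card /def_set /fiber_card /fiber -card_ffunS; apply: eq_card => t; rewrite !inE.
congr (`[< _ >]); apply/propext/sat_ext => k; rewrite tenvS; case: k => //= k.
by apply: tenv_ext => // j; rewrite ffunE.
Qed.

Lemma sat_fibers i (g : 'I_n -> M i) :
  let all_coll :=
    forall z, collides (@addi L (M i)) (@muli L (M i)) (fiber phi (tenv g (param_env b i))) z in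
  (sat (tenv g (param_env b i)) (thin_fibers n m phi) <-> (0 < fiber_card g)%N /\ ~ all_coll) /\
  (sat (tenv g (param_env b i)) (thick_fibers n m phi) <-> (0 < fiber_card g)%N /\ all_coll).
Proof.
have e_zero := @tenv_param_zero i g.
rewrite /thin_fibers /thick_fibers !sat_fand sat_fnot (sat_exists_first _ e_zero).
by rewrite (sat_all_collide _ e_zero) /fiber_card card_gt0 -(rwP (set0Pn _)).
Qed.

Lemma fiber_card_split i (g : 'I_n -> M i) : fiber_card g =
  (`[< sat (tenv g (param_env b i)) (thin_fibers n m phi) >] * fiber_card g +
   `[< sat (tenv g (param_env b i)) (thick_fibers n m phi) >] * fiber_card g)%N.
Proof.
have [thin thick] := sat_fibers g.
have [->|fc_gt0] := posnP (fiber_card g); first by rewrite !muln0.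
have [coll|ncoll] := pselect (forall z, collides (@addi L (M i)) (@muli L (M i))
                                  (fiber phi (tenv g (param_env b i))) z).
  have /asboolPn/negbTE -> : ~ sat (tenv g (param_env b i)) (thin_fibers n m phi).
    by move=> /thin[_ []].
  have /asboolP -> : sat (tenv g (param_env b i)) (thick_fibers n m phi) by apply/thick.
  by rewrite mul0n mul1n.
have /asboolPn/negbTE -> : ~ sat (tenv g (param_env b i)) (thick_fibers n m phi).
  by move=> /thick[_ /ncoll].
have /asboolP -> : sat (tenv g (param_env b i)) (thin_fibers n m phi) by apply/thin.
by rewrite mul0n mul1n addn0.
Qed.

End Fibers.

Lemma nat_le_cut (R : archiRealFieldType) (r : R) :
  exists j : nat, forall k : nat, (k%:R <= r) = (k < j)%N.
Proof.
have [r_ge0|r_lt0] := leP 0 r; first by exists (Num.truncn r).+1 => k; rewrite ltnS truncn_ge_nat.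
by exists 0%N => k; apply/negbTE; rewrite -ltNge (lt_le_trans r_lt0).
Qed.

Lemma nat_expR_ln (R : realType) (x : nat) : (0 < x)%N -> (x%:R : R) = expR (ln x%:R).
Proof. by move=> x_gt0; rewrite lnK // posrE ltr0n. Qed.

Section Dimension.
Variables (L : signature) (I : Type) (U : ultrafilter I) (M : I -> fin_struct L) (R : realType).
Variable a0 : elt M.
Hypothesis card_M_unbounded : forall N : nat, U (fun i => (N <= #|M i|)%N).
Hypothesis field_M :
  U (fun i => field_axioms (@addi L (M i)) (@muli L (M i)) (zeroi (M i)) (onei (M i))).
Hypothesis delta_dim1 : forall (m : nat) (phi : formula L) (b : 'I_m -> elt M),
  (exists a, phiset U 1 phi b a) ->
  delta U R (phiset U 1 phi b) = 0%E \/ delta U R (phiset U 1 phi b) = 1%E.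

Local Notation card_M := (fun i => #|M i|).
Local Notation logq i := (ln (#|M i|%:R : R)).

Section FiberSums.
Variables (n m : nat) (phi : formula L) (b : 'I_m -> elt M).

Local Notation fiber_at x i := (fiber phi (tenv (fun j => x j i) (param_env b i))).
Local Notation fc x i := (fiber_card phi b (fun j => x j i)).
Local Notation fcg g := ((fiber_card phi b g)%:R : R).


Lemma fiber_delta_bounds (x : 'I_n -> elt M) (r : R) :
  delta U R (phiset U 1 phi (join_params b x)) = r%:E -> forall e, 0 < e ->
  U (fun i => (0 < fc x i)%N /\ (r - e) * logq i < ln ((fc x i)%:R : R) /\
                                ln ((fc x i)%:R : R) < (r + e) * logq i).
Proof.
move=> delta_r e e_gt0.
have delta_fin : delta U R (phiset U 1 phi (join_params b x)) <> -oo%E by rewrite delta_r.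
have := stU_delta_phiset a0 delta_fin; rewrite delta_r.
move=> /(log_bounds_stU card_M_unbounded) /(_ _ e_gt0) bounds.
by apply: (uf_mp bounds) => i; rewrite def_card1_join.
Qed.

Lemma fiber_delta01 (x : 'I_n -> elt M) : U (fun i => (0 < fc x i)%N) ->
  delta U R (phiset U 1 phi (join_params b x)) = 0%E \/
  delta U R (phiset U 1 phi (join_params b x)) = 1%E.
Proof.
move=> fc_gt0; apply: delta_dim1.
have [a fa] : exists a : elt M, U (fun i => a i \in fiber_at x i).
  apply: (uf_exists_choice a0 (P := fun i y => y \in fiber_at x i)).
  by apply: (uf_mp fc_gt0) => i; rewrite card_gt0 => /set0Pn.
exists (fun _ => a); apply/(phiset_los U a0); apply: (uf_mp fa) => i /in_fiber.
by apply: sat_extW => k; rewrite tenvS; case: k => //= k; rewrite tenv0 param_env_join.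
Qed.

(* A fiber on which all the maps (a, c) |-> a + z c collide has size at
   least |M|^(1/4), so it cannot have dimension 0. *)
Lemma thick_fiber_large (x : 'I_n -> elt M) :
  U (fun i => sat (tenv (fun j => x j i) (param_env b i)) (thick_fibers n m phi)) ->
  forall e, 0 < e -> U (fun i => (1 - e) * logq i < ln ((fc x i)%:R : R)).
Proof.
move=> thick; have {}thick : U (fun i => (0 < fc x i)%N /\
    forall z, collides (@addi L (M i)) (@muli L (M i)) (fiber_at x i) z).
  by apply: (uf_mp thick) => i /(sat_fibers phi b (fun j => x j i)).2.
have [delta0|delta1] := fiber_delta01 (uf_mp thick (fun i h => proj1 h)); last first.
  by move=> e e_gt0; apply: (uf_mp (fiber_delta_bounds delta1 e_gt0)) => i [_ []].
have small := fiber_delta_bounds delta0 (ltac:(lra) : (0 : R) < 1 / 8).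
exfalso; apply: (@uf_not0 _ U).
apply: (uf_mp (uf_inter (uf_inter small thick) (uf_inter field_M (logq_gt0 R card_M_unbounded)))).
move=> i [[[fc_gt0 [_ fc_hi]] [_ coll]] [field_i q_gt0]].
have q_le : (#|M i| <= fc x i ^ 4)%N := card_leq_exp4_collides field_i coll.
have := ln_nat_le R (leq_trans fc_gt0 (max_card _)) q_le.
by rewrite natrX lnXn ?ltr0n // -[_ *+ 4]mulr_natr; lra.
Qed.

(* A fiber on which some map (a, c) |-> a + z c is injective has size at
   most |M|^(1/2), so it cannot have dimension 1. *)
Lemma thin_fiber_small (x : 'I_n -> elt M) :
  U (fun i => sat (tenv (fun j => x j i) (param_env b i)) (thin_fibers n m phi)) ->
  forall e, 0 < e -> U (fun i => ln ((fc x i)%:R : R) < e * logq i).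
Proof.
move=> thin; have {}thin : U (fun i => (0 < fc x i)%N /\
    ~ forall z, collides (@addi L (M i)) (@muli L (M i)) (fiber_at x i) z).
  by apply: (uf_mp thin) => i /(sat_fibers phi b (fun j => x j i)).1.
have [delta0|delta1] := fiber_delta01 (uf_mp thin (fun i h => proj1 h)).
  by move=> e e_gt0; apply: (uf_mp (fiber_delta_bounds delta0 e_gt0)) => i [_ []]; rewrite !add0r.
have large := fiber_delta_bounds delta1 (ltac:(lra) : (0 : R) < 1 / 4).
exfalso; apply: (@uf_not0 _ U).
apply: (uf_mp (uf_inter (uf_inter large thin) (logq_gt0 R card_M_unbounded))).
move=> i [[[fc_gt0 [fc_lo _]] [_ /existsNP [z ncoll]]] q_gt0].
have fc2_le : (fc x i ^ 2 <= #|M i|)%N := exp2_card_leq_not_collides ncoll.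
have fc2_gt0 : (0 < fc x i ^ 2)%N by rewrite expn_gt0 fc_gt0.
have := ln_nat_le R fc2_gt0 fc2_le.
by rewrite natrX lnXn ?ltr0n // -[_ *+ 2]mulr_natr; lra.
Qed.

Lemma uf_forall_params (P : forall i, ('I_n -> M i) -> Prop) :
  (forall x : 'I_n -> elt M, U (fun i => P i (fun j => x j i))) ->
  U (fun i => forall g : {ffun 'I_n -> M i}, P i g).
Proof.
move=> UP; apply: (uf_forall_choice (T := fun i => {ffun 'I_n -> M i}) (fun i => [ffun=> a0 i])).
by move=> t; apply: (uf_mp (UP (fun j i => t i j))) => i.
Qed.

Lemma uf_forall_params_impl (psi : formula L) (P : forall i, ('I_n -> M i) -> Prop) :
  (forall x : 'I_n -> elt M, U (fun i => sat (tenv (fun j => x j i) (param_env b i)) psi) ->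
     U (fun i => P i (fun j => x j i))) ->
  U (fun i => forall g : {ffun 'I_n -> M i}, sat (tenv g (param_env b i)) psi -> P i g).
Proof.
move=> UP; apply: (uf_forall_params (P := fun i g => sat (tenv g (param_env b i)) psi -> P i g)).
move=> x; pose sat_x i := sat (tenv (fun j => x j i) (param_env b i)) psi.
have [/UP Px|/uf_not nsat] := pselect (U sat_x).
  by apply: (uf_mp Px) => i.
by apply: (uf_mp nsat) => i nsat_i /nsat_i.
Qed.

Lemma thin_fibers_small e : 0 < e -> U (fun i => forall g : {ffun 'I_n -> M i},
  sat (tenv g (param_env b i)) (thin_fibers n m phi) -> ln (fcg g) < e * logq i).
Proof.
move=> e_gt0; apply: (uf_forall_params_impl (P := fun i g => ln (fcg g) < e * logq i)).
by move=> x /thin_fiber_small /(_ _ e_gt0).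
Qed.

Lemma thick_fibers_large e : 0 < e -> U (fun i => forall g : {ffun 'I_n -> M i},
  sat (tenv g (param_env b i)) (thick_fibers n m phi) -> (1 - e) * logq i < ln (fcg g)).
Proof.
move=> e_gt0; apply: (uf_forall_params_impl (P := fun i g => (1 - e) * logq i < ln (fcg g))).
by move=> x /thick_fiber_large /(_ _ e_gt0).
Qed.

Definition fiber_sum (psi : formula L) (i : I) : nat :=
  (\sum_(g : {ffun 'I_n -> M i}) `[< sat (tenv g (param_env b i)) psi >] * fiber_card phi b g)%N.

Lemma def_cardS_split i : def_card n.+1 phi b i =
  (fiber_sum (thin_fibers n m phi) i + fiber_sum (thick_fibers n m phi) i)%N.
Proof.
by rewrite def_cardS /fiber_sum -big_split; apply: eq_bigr => g _; apply: fiber_card_split.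
Qed.

Lemma null_fiber_sum psi : null_ae U (def_card n psi b) -> null_ae U (fiber_sum psi).
Proof.
apply: null_scale; apply: (uf_mp (uf_T U)) => i _.
rewrite /fiber_sum /def_card /def_set card_set_sum big_distrl /=.
by apply: leq_sum => g _; rewrite leq_mul2l; apply/orP; right; apply: max_card.
Qed.

Lemma log_dim_thin_sum k : log_dim R U card_M (def_card n (thin_fibers n m phi) b) k ->
  log_dim R U card_M (fiber_sum (thin_fibers n m phi)) k.
Proof.
move=> dim_thin; rewrite -[k]addn0; apply: (log_dim_scale card_M_unbounded _ dim_thin) => e e_gt0.
apply: (uf_mp (uf_inter (thin_fibers_small e_gt0) (logq_gt0 R card_M_unbounded))).
move=> i [small q_gt0].
apply: sum_card_bounds => g /asboolP thin_g.
have [fc_gt0 _] := (sat_fibers phi b g).1.1 thin_g.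
have small_g := small g thin_g.
have := ln_nat_le R (isT : (0 < 1)%N) fc_gt0; rewrite ln1 => ln_ge0.
by rewrite (nat_expR_ln R fc_gt0) !ler_expR; split; nra.
Qed.

Lemma log_dim_thick_sum k : log_dim R U card_M (def_card n (thick_fibers n m phi) b) k ->
  log_dim R U card_M (fiber_sum (thick_fibers n m phi)) k.+1.
Proof.
move=> dim_thick; rewrite -addn1; apply: (log_dim_scale card_M_unbounded _ dim_thick) => e e_gt0.
apply: (uf_mp (uf_inter (thick_fibers_large e_gt0) (logq_gt0 R card_M_unbounded))).
move=> i [large q_gt0].
apply: sum_card_bounds => g /asboolP thick_g.
have [fc_gt0 _] := (sat_fibers phi b g).2.1 thick_g.
have large_g := large g thick_g; have fc_le := ln_nat_le R fc_gt0 (max_card _).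
by rewrite (nat_expR_ln R fc_gt0) !ler_expR; split; nra.
Qed.

End FiberSums.

(* [K] is one more than the dimension of [phi(M, b)], and [0] when this set
   is empty; [theta j] defines the set of parameters [b] for which [j < K]. *)
Definition dim_definable (n : nat) : Prop :=
  forall m (phi : formula L), exists theta : nat -> formula L, forall b : 'I_m -> elt M,
  exists2 K, (K <= n.+1)%N & (forall j, zdef U (theta j) b <-> (j < K)%N) /\
    if K is k.+1 then log_dim R U card_M (def_card n phi b) k else null_ae U (def_card n phi b).

Lemma zdef_or m p q (b : 'I_m -> elt M) : zdef U (f_or p q) b <-> zdef U p b \/ zdef U q b.
Proof.
split=> [|[zp [nzp _]|zq [_ nzq]]] //.
by move=> /not_andP [] /contrapT; [left|right].
Qed.

Lemma def_card0 m phi (b : 'I_m -> elt M) i : def_card 0 phi b i = `[< sat (param_env b i) phi >].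
Proof.
rewrite /def_card /def_set card_set_sum.
rewrite (eq_bigr (fun _ => nat_of_bool `[< sat (param_env b i) phi >])).
  by rewrite sum_nat_const card_ffun card_ord expn0 mul1n.
by move=> t _; congr (nat_of_bool `[< _ >]); apply/propext/sat_ext => k; rewrite tenv0.
Qed.

Lemma dim_definable0 : dim_definable 0.
Proof.
move=> m phi; exists (fun j => if j is 0 then phi else ffalse L) => b.
have [phi_b|nphi_b] := pselect (zdef U phi b); [exists 1%N|exists 0%N]; split=> //.
- by case.
- move: phi_b => /(zdef_los U a0) phi_b e e_gt0.
  apply: (uf_mp (uf_inter phi_b (logq_gt0 R card_M_unbounded))) => i [sat_i q_gt0].
  by rewrite def_card0 (asboolT sat_i) ln1; split=> //; split; nra.
- by case.
- move/(zdef_los U a0)/uf_not: nphi_b => nphi_b.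
  by apply: (uf_mp nphi_b) => i nsat_i; rewrite def_card0 (asboolF nsat_i).
Qed.

(* Thick fibers add one to the dimension of their base, hence the shift of [theta1]. *)
Lemma dim_definableS n : dim_definable n -> dim_definable n.+1.
Proof.
move=> IHn m phi.
have [theta0 spec0] := IHn m (thin_fibers n m phi).
have [theta1 spec1] := IHn m (thick_fibers n m phi).
exists (fun j => f_or (theta0 j) (theta1 j.-1)) => b.
have [K0 le_K0 [theta0E dim0]] := spec0 b.
have [K1 le_K1 [theta1E dim1]] := spec1 b.
have def_cardE : def_card n.+1 phi b = (fun i =>
    fiber_sum n phi b (thin_fibers n m phi) i + fiber_sum n phi b (thick_fibers n m phi) i)%N.
  by apply: functional_extensionality_dep => i; rewrite def_cardS_split.
exists (maxn K0 (if K1 is 0 then 0 else K1.+1)); first by case: K1 {spec1 theta1E dim1} le_K1; lia.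
split.
  by move=> [|j]; rewrite zdef_or theta0E theta1E; case: K1 {spec1 theta1E dim1} le_K1; lia.
rewrite def_cardE; move: dim0 dim1 => /=.
have null_sum := null_fiber_sum (n := n) phi (b := b).
have dim_thin := log_dim_thin_sum (n := n) (phi := phi) (b := b).
have dim_thick := log_dim_thick_sum (n := n) (phi := phi) (b := b).
case: K0 {spec0 theta0E le_K0} => [|k0]; case: K1 {spec1 theta1E le_K1} => [|k1] /= dim0 dim1.
- exact: (null_addn (null_sum _ dim0) (null_sum _ dim1)).
- exact: (log_dim_null_addn (null_sum _ dim0) (dim_thick _ dim1)).
- by rewrite ?maxn0; apply: (log_dim_addn_null (dim_thin _ dim0) (null_sum _ dim1)).
- by rewrite ?maxnSS; apply: (log_dim_addn card_M_unbounded (dim_thin _ dim0) (dim_thick _ dim1)).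
Qed.

Lemma dim_definable_all n : dim_definable n.
Proof. by elim: n => [|n]; [apply: dim_definable0|apply: dim_definableS]. Qed.

Lemma delta_phiset_spec n m (phi : formula L) : exists theta : nat -> formula L,
  forall b : 'I_m -> elt M, exists2 K, (K <= n.+1)%N &
  [/\ forall j, zdef U (theta j) b <-> (j < K)%N,
      delta U R (phiset U n phi b) = (if K is k.+1 then (k%:R)%:E else -oo)%E &
      (exists a, phiset U n phi b a) -> (0 < K)%N].
Proof.
have [theta spec] := dim_definable_all n m phi; exists theta => b.
have [K le_K [thetaE dim]] := spec b; exists K => //; split=> //.
  case: K {le_K thetaE} dim => [|k] dim; apply: (delta_phiset a0).
    exact: (stU_null card_M_unbounded dim).
  exact: (stU_log_dim card_M_unbounded dim).
case: K {le_K thetaE} dim => // null [a /(represents_phiset U a0 phi b a) phi_a].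
exfalso; apply: (@uf_not0 _ U); apply: (uf_mp (uf_inter null phi_a)) => i [card0 a_i].
by move: card0; rewrite /def_card => /cards0_eq /setP /(_ [ffun k => a k i]); rewrite a_i inE.
Qed.

Lemma delta_phiset_cut n m (phi : formula L) (r1 r2 : R) : r1 < r2 ->
  exists chi : formula L, forall b : 'I_m -> elt M,
    (delta U R (phiset U n phi b) <= r1%:E -> zdef U chi b)%E /\
    (zdef U chi b -> delta U R (phiset U n phi b) < r2%:E)%E.
Proof.
move=> lt_r12; have [theta spec] := delta_phiset_spec n m phi.
have [j cut_j] := nat_le_cut r1.
exists (fnot (theta j)) => b; have [[|k] _ [thetaE -> _]] := spec b.
  by split=> [_ /thetaE|_]; rewrite ?ltNyr.
rewrite lee_fin lte_fin /zdef /= -/(zdef U _ b) thetaE cut_j; split; first lia.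
by move=> ge_jk; apply: (le_lt_trans _ lt_r12); rewrite cut_j; lia.
Qed.

Lemma delta_phiset_finite n m (phi : formula L) :
  exists s : seq (\bar R), forall b : 'I_m -> elt M, delta U R (phiset U n phi b) \in s.
Proof.
have [theta spec] := delta_phiset_spec n m phi.
exists (-oo%E :: [seq (k%:R)%:E | k <- iota 0 n.+1]) => b.
have [[|k] le_K [_ -> _]] := spec b; rewrite inE ?eqxx //.
by apply/orP; right; apply/mapP; exists k; rewrite // mem_iota.
Qed.

Lemma delta_phiset_nat n m (phi : formula L) (b : 'I_m -> elt M) :
  (exists a, phiset U n phi b a) ->
  exists k : nat, (k <= n)%N /\ delta U R (phiset U n phi b) = (k%:R)%:E.
Proof.
have [theta spec] := delta_phiset_spec n m phi.
by have [[|k] le_K [_ -> K_gt0]] := spec b => /K_gt0 //; exists k.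
Qed.

End Dimension.

Unset Implicit Arguments. Set Strict Implicit.
Local Open Scope ereal_scope.

Theorem lemma2p13 (R : realType) (L : signature) (I : Type) (U : ultrafilter I)
    (M : I -> fin_struct L) :
  ultra_is_field U M ->
  ultra_infinite U M ->
  (forall (m : nat) (phi : formula L) (b : 'I_m -> elt M),
     (exists a, phiset U 1 phi b a) ->
     delta U R (phiset U 1 phi b) = 0 \/ delta U R (phiset U 1 phi b) = 1) ->
  delta_definable U M R /\
  (forall (n m : nat) (psi : formula L) (c : 'I_m -> elt M),
     (exists a, phiset U n psi c a) ->
     exists k : nat, (k <= n)%N /\ delta U R (phiset U n psi c) = (k%:R)%:E).
Proof.
move=> M_field M_inf delta_dim1.
have [a _] := M_inf 1%N; pose a0 := a ord0.
have card_M_unbounded := card_unbounded M_inf.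
have field_M := field_factors a0 M_field.
split; first split.
- by move=> n m phi r1 r2; apply: (delta_phiset_cut a0 card_M_unbounded field_M delta_dim1).
- by move=> n m phi; apply: (delta_phiset_finite a0 card_M_unbounded field_M delta_dim1).
- by move=> n m psi c; apply: (delta_phiset_nat a0 card_M_unbounded field_M delta_dim1).
Qed.
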